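(* For any $k,d$ and $\rho$, a Bayes-optimal strategy for $\mathrm{Sing}(k,q_{HC})$ is: the learner keeps all of its data, and on a test point $z$ outputs the label of the training example closest to $z$ in Hamming distance.
   Context: Component distribution $q_{HC}$ (dimension $d$, $\rho\in[0,1]$): a subpopulation has $\mathcal I\subseteq[d]$ containing each index independently w.p. $\rho$ and uniform bits $b(i)$, $i\in\mathcal I$; an example from it is $z\in\{0,1\}^d$ with $z(i)=b(i)$ on $\mathcal I$ and independent uniform bits elsewhere. Task $\mathrm{Sing}(k,q_{HC})$: draw $k$ subpopulations i.i.d. from $q_{HC}$ and one example $x_j$ from subpopulation $j$, $j\in[k]$; the learner receives $(x_1,\dots,x_k)$ (example $x_j$ has label $j$); an index $j^*$ is uniform in $[k]$ and a fresh test point $z$ is drawn from subpopulation $j^*$; the learner must output $j^*$. *)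

From mathcomp Require Import all_boot all_order all_algebra.
Set Implicit Arguments. Unset Strict Implicit. Unset Printing Implicit Defensive.
Import Order.TTheory GRing.Theory Num.Theory.
Local Open Scope ring_scope.

Definition example (d : nat) := {ffun 'I_d -> bool}.

(* A subpopulation of q_HC: the index set I and the bits b.  The bits b are
   drawn uniformly on all of [d]; only the values on I are ever used, so the
   induced distribution over subpopulations (as distributions over examples)
   is exactly the one of q_HC. *)
Definition subpop (d : nat) := ({set 'I_d} * {ffun 'I_d -> bool})%type.

Definition subpop_prob (R : realFieldType) (d : nat) (rho : R) (s : subpop d) : R :=
  rho ^+ #|s.1| * (1 - rho) ^+ (d - #|s.1|) / (2%:R ^+ d).

Definition example_prob (R : realFieldType) (d : nat) (s : subpop d) (z : example d) : R :=
  if [forall i, (i \in s.1) ==> (z i == s.2 i)]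
  then (2%:R ^+ (d - #|s.1|))^-1 else 0.

(* A (possibly randomized) learner: given the training set (x_1..x_k) (x_j has
   label j) and the test point z, a distribution over the output label. *)
Definition strategy (R : realFieldType) (k d : nat) :=
  {ffun 'I_k -> example d} -> example d -> 'I_k -> R.

Definition is_strategy (R : realFieldType) (k d : nat) (A : strategy R k d) : Prop :=
  forall X z, (forall j, 0 <= A X z j) /\ \sum_(j < k) A X z j = 1.

Definition success_prob (R : realFieldType) (k d : nat) (rho : R)
    (A : strategy R k d) : R :=
  \sum_(S : {ffun 'I_k -> subpop d})
  \sum_(X : {ffun 'I_k -> example d})
  \sum_(js : 'I_k)
  \sum_(z : example d)
    (\prod_(j < k) (subpop_prob rho (S j) * example_prob R (S j) (X j)))
    * (k%:R)^-1 * example_prob R (S js) z * A X z js.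

Definition det_strategy (R : realFieldType) (k d : nat)
    (f : {ffun 'I_k -> example d} -> example d -> 'I_k) : strategy R k d :=
  fun X z j => ((f X z == j)%:R : R).

Definition hamming (d : nat) (x z : example d) : nat := #|[set i | x i != z i]|.

Definition nearest_neighbor_rule (k d : nat)
    (f : {ffun 'I_k -> example d} -> example d -> 'I_k) : Prop :=
  forall (X : {ffun 'I_k -> example d}) (z : example d) (j : 'I_k), (hamming (X (f X z)) z <= hamming (X j) z)%N.

From mathcomp Require Import all_boot all_order all_algebra.
From mathcomp Require Import ring lra zify.
Import Order.TTheory GRing.Theory Num.Theory.
Set Implicit Arguments. Unset Strict Implicit. Unset Printing Implicit Defensive.
Local Open Scope ring_scope.

(* Regrouping the sums of success_prob, the success of a strategy A is
   \sum_(X, z) \sum_j W(X, z, j) * A X z j, where W(X, z, j) is the joint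
   weight of the data X, the test point z and the event j^* = j.  For each
   (X, z) this is a convex combination of the W(X, z, j), hence at most
   max_j W(X, z, j), which the deterministic rule picking a maximiser attains
   (lemma convex_combination_le_max).

   To identify the maximiser, both distributions are written as products over
   the d coordinates (subpop_prob_prod, example_prob_prod) and the sum over
   subpopulations is factorised coordinatewise (sum_subpop_prod).  This shows
   that a single example is uniform on {0,1}^d (example_marginal) and that the
   joint weight of two examples of one subpopulation is
   c^h * a^(d-h) with h their Hamming distance and 0 <= c <= a (pair_weight_hamming),
   hence nonincreasing in h (pair_weight_antitone).  Since
   W(X, z, j) = k^-1 * pair_weight(X j, z) * 2^(-d(k-1)) (joint_weight_factor),
   the example nearest to z maximises W(X, z, .). *)

Lemma card_notin (d : nat) (I : {set 'I_d}) :
  #|[pred i : 'I_d | i \notin I]| = (d - #|I|)%N.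
Proof.
have -> : #|[pred i : 'I_d | i \notin I]| = #|~: I|.
  by apply: eq_card => i; rewrite !inE.
by have := cardsC I; rewrite card_ord; lia.
Qed.

Lemma sum_subpop_prod (R : realFieldType) (d : nat) (F : 'I_d -> bool -> bool -> R) :
  \sum_(s : subpop d) \prod_(i < d) F i (i \in s.1) (s.2 i) =
  \prod_(i < d) \sum_(u : bool) \sum_(v : bool) F i u v.
Proof.
rewrite -(pair_bigA _ (fun (I : {set 'I_d}) (b : {ffun 'I_d -> bool}) =>
   \prod_(i < d) F i (i \in I) (b i))) /=.
rewrite (reindex (fun u : {ffun 'I_d -> bool} => [set i | u i])) /=; last first.
  exists (fun A : {set 'I_d} => [ffun i => i \in A]) => u _.
    by apply/ffunP=> i; rewrite ffunE inE.
  by apply/setP => i; rewrite inE ffunE.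
rewrite (bigA_distr_bigA (fun i w => \sum_(v : bool) F i w v)).
apply: eq_bigr => u _.
rewrite (bigA_distr_bigA (fun i v => F i (u i) v)).
by apply: eq_bigr => b _; apply: eq_bigr => i _; rewrite inE.
Qed.

Lemma subpop_prob_prod (R : realFieldType) (d : nat) (rho : R) (s : subpop d) :
  subpop_prob rho s = \prod_(i < d) ((if i \in s.1 then rho else 1 - rho) / 2%:R).
Proof.
rewrite /subpop_prob big_split /= prodr_const card_ord.
rewrite (bigID (fun i => i \in s.1)) /=.
rewrite (eq_bigr (fun _ => rho)); last by move=> i ->.
rewrite [X in _ = _ * X * _](eq_bigr (fun _ => 1 - rho)); last by move=> i /negbTE ->.
by rewrite !prodr_const exprVn card_notin.
Qed.

Lemma example_prob_prod (R : realFieldType) (d : nat) (s : subpop d) (x : example d) :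
  example_prob R s x =
  \prod_(i < d) (if i \in s.1 then ((x i == s.2 i)%:R : R) else 2%:R^-1).
Proof.
rewrite /example_prob (bigID (fun i => i \in s.1)) /=.
rewrite [X in _ = _ * X](eq_bigr (fun _ => 2%:R^-1)); last by move=> i /negbTE ->.
rewrite prodr_const card_notin exprVn.
case: (boolP [forall _, _]) => [agree | /forallPn [i]].
  rewrite big1 ?mul1r // => i Ii.
  by have := forallP agree i; rewrite Ii /= => /eqP ->; rewrite eqxx.
rewrite negb_imply => /andP [Ii neq_i].
by rewrite (bigD1 i) //= Ii (negbTE neq_i) !mul0r.
Qed.

Definition pair_weight (R : realFieldType) (d : nat) (rho : R) (x z : example d) : R :=
  \sum_(s : subpop d) subpop_prob rho s * example_prob R s x * example_prob R s z.

Lemma example_marginal (R : realFieldType) (d : nat) (rho : R) (x : example d) :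
  \sum_(s : subpop d) subpop_prob rho s * example_prob R s x = 2%:R^-1 ^+ d.
Proof.
under eq_bigr => s _ do rewrite subpop_prob_prod example_prob_prod -big_split /=.
rewrite (sum_subpop_prod (fun i u v => (if u then rho else 1 - rho) / 2%:R *
   (if u then ((x i == v)%:R : R) else 2%:R^-1))).
rewrite -[d in RHS]card_ord -prodr_const; apply: eq_bigr => i _.
by rewrite !big_bool /=; case: (x i) => /=; rewrite ?mulr1n ?mulr0n; field.
Qed.

(* The pair weight only depends on the Hamming distance h of x and z:
   it is c^h * a^(d-h), with c the weight of a disagreeing coordinate and a
   that of an agreeing one. *)
Lemma pair_weight_hamming (R : realFieldType) (d : nat) (rho : R) (x z : example d) :
  pair_weight rho x z = ((1 - rho) / 4%:R) ^+ hamming x z *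
                        (rho / 2%:R + (1 - rho) / 4%:R) ^+ (d - hamming x z).
Proof.
have coordinatewise : pair_weight rho x z = \prod_(i < d)
    (if x i == z i then rho / 2%:R + (1 - rho) / 4%:R else (1 - rho) / 4%:R).
  rewrite /pair_weight.
  under eq_bigr => s _ do rewrite subpop_prob_prod !example_prob_prod -!big_split /=.
  rewrite (sum_subpop_prod (fun i u v => (if u then rho else 1 - rho) / 2%:R *
     (if u then ((x i == v)%:R : R) else 2%:R^-1) *
     (if u then ((z i == v)%:R : R) else 2%:R^-1))).
  apply: eq_bigr => i _; rewrite !big_bool /=.
  by case: (x i); case: (z i) => /=; rewrite ?mulr1n ?mulr0n; field.
rewrite coordinatewise (bigID (fun i => x i != z i)) /=.
rewrite (eq_bigr (fun _ => (1 - rho) / 4%:R)); last by move=> i /negbTE ->.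
rewrite [X in _ * X](eq_bigr (fun _ => rho / 2%:R + (1 - rho) / 4%:R)); last first.
  by move=> i; rewrite negbK => ->.
rewrite !prodr_const; congr (_ ^+ _ * _ ^+ _).
  by apply: eq_card => i; rewrite !inE.
by rewrite /hamming -card_notin; apply: eq_card => i; rewrite !inE.
Qed.

Lemma exp_profile_antitone (R : realFieldType) (c a : R) (d h h' : nat) :
  0 <= c -> c <= a -> (h' <= h)%N -> (h <= d)%N ->
  c ^+ h * a ^+ (d - h) <= c ^+ h' * a ^+ (d - h').
Proof.
move=> c0 ca le_h'h le_hd.
have a0 : 0 <= a by apply: le_trans ca.
have -> : h = (h' + (h - h'))%N by lia.
have -> : (d - h')%N = ((h - h') + (d - h))%N by lia.
have -> : (d - (h' + (h - h')))%N = (d - h)%N by lia.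
rewrite !exprD mulrA.
apply: ler_wpM2r; first exact: exprn_ge0.
apply: ler_wpM2l; first exact: exprn_ge0.
by apply: lerXn2r; rewrite ?nnegrE.
Qed.

Lemma pair_weight_antitone (R : realFieldType) (d : nat) (rho : R) (x x' z : example d) :
  0 <= rho -> rho <= 1 -> (hamming x' z <= hamming x z)%N ->
  pair_weight rho x z <= pair_weight rho x' z.
Proof.
move=> rho0 rho1 closer; rewrite !pair_weight_hamming.
apply: exp_profile_antitone closer _; [lra | lra |].
by rewrite /hamming; have := max_card (mem [set i | x i != z i]); rewrite card_ord.
Qed.

Definition joint_weight (R : realFieldType) (k d : nat) (rho : R)
  (X : {ffun 'I_k -> example d}) (z : example d) (j : 'I_k) : R :=
  \sum_(S : {ffun 'I_k -> subpop d})
    (\prod_(i < k) (subpop_prob rho (S i) * example_prob R (S i) (X i)))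
    * (k%:R)^-1 * example_prob R (S j) z.

Lemma success_prob_joint_weight (R : realFieldType) (k d : nat) (rho : R)
    (A : strategy R k d) :
  success_prob rho A =
  \sum_(X : {ffun 'I_k -> example d}) \sum_(z : example d) \sum_(j < k)
     joint_weight rho X z j * A X z j.
Proof.
rewrite /success_prob exchange_big; apply: eq_bigr => X _.
rewrite exchange_big /=.
under eq_bigr => j _ do rewrite exchange_big /=.
rewrite exchange_big /=; apply: eq_bigr => z _; apply: eq_bigr => j _.
by rewrite /joint_weight mulr_suml.
Qed.

(* The subpopulations are independent: only the j-th one is shared with z,
   and every other training example contributes its uniform marginal. *)
Lemma joint_weight_factor (R : realFieldType) (k d : nat) (rho : R)
  (X : {ffun 'I_k -> example d}) (z : example d) (j : 'I_k) :
  joint_weight rho X z j =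
  (k%:R)^-1 * (pair_weight rho (X j) z * (2%:R^-1 ^+ d) ^+ k.-1).
Proof.
rewrite /joint_weight.
transitivity ((k%:R)^-1 * \sum_(S : {ffun 'I_k -> subpop d}) \prod_(i < k)
   (subpop_prob rho (S i) * example_prob R (S i) (X i) *
    (if i == j then example_prob R (S i) z else 1))).
  rewrite mulr_sumr; apply: eq_bigr => S _.
  rewrite [in RHS]big_split /= [Y in _ = _ * (_ * Y)](bigD1 j) //= eqxx.
  rewrite [Y in _ = _ * (_ * (_ * Y))]big1 ?mulr1; last by move=> i /negbTE ->.
  ring.
rewrite -(bigA_distr_bigA (fun i s => subpop_prob rho s * example_prob R s (X i) *
    (if i == j then example_prob R s z else 1))) /=.
congr (_ * _); rewrite (bigD1 j) //= eqxx; congr (_ * _).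
rewrite (eq_bigr (fun _ => 2%:R^-1 ^+ d)); last first.
  move=> i /negbTE ->; rewrite -(example_marginal rho (X i)).
  by apply: eq_bigr => s _; rewrite mulr1.
by rewrite prodr_const cardC1 card_ord.
Qed.

Lemma convex_combination_le_max (R : realFieldType) (I : finType)
    (w a : I -> R) (i0 : I) :
  (forall i, w i <= w i0) -> (forall i, 0 <= a i) -> \sum_i a i = 1 ->
  \sum_i w i * a i <= w i0.
Proof.
move=> w_max a_ge0 a_sum1.
apply: (@le_trans _ _ (\sum_i w i0 * a i)).
  by apply: ler_sum => i _; apply: ler_wpM2r.
by rewrite -mulr_sumr a_sum1 mulr1.
Qed.

Lemma sum_weight_indicator (R : realFieldType) (I : finType) (w : I -> R) (i0 : I) :
  \sum_i w i * ((i0 == i)%:R : R) = w i0.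
Proof.
rewrite (bigD1 i0) //= eqxx mulr1 big1 ?addr0 //.
by move=> i /negbTE ne; rewrite eq_sym ne mulr0.
Qed.

Unset Implicit Arguments.
Theorem proposition4p1 (R : realFieldType) (k d : nat) (rho : R)
  (hrho0 : 0 <= rho) (hrho1 : rho <= 1)
  (f : {ffun 'I_k -> example d} -> example d -> 'I_k)
  (hf : nearest_neighbor_rule f)
  (A : strategy R k d) (hA : is_strategy A) :
  success_prob rho A <= success_prob rho (det_strategy R f).
Proof.
rewrite !success_prob_joint_weight; apply: ler_sum => X _; apply: ler_sum => z _.
rewrite [X in _ <= X]sum_weight_indicator.
have nearest_is_max : forall j, joint_weight rho X z j <= joint_weight rho X z (f X z).
  move=> j; rewrite !joint_weight_factor.
  apply: ler_wpM2l; first by rewrite invr_ge0 ler0n.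
  apply: ler_wpM2r; first by rewrite !exprn_ge0 // invr_ge0 ler0n.
  exact: pair_weight_antitone (hf X z j).
by have [A_ge0 A_sum1] := hA X z; apply: convex_combination_le_max.
Qed.
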